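(* Let $G$ be a finite group acting transitively on a finite set $X$, fix $x_0\in X$, let $H=G_{x_0}$, and let $K\subset G$ be a regular subgroup. Let $H$ act on $K$ by $h\cdot k=k'$ iff $hk\cdot x_0=k'\cdot x_0$, and let $L^2(K)^H=\{\varphi\colon K\to\mathbb{C}:\varphi(h\cdot k)=\varphi(k)\ \forall h\in H,k\in K\}$. Then $L^2(K)^H$ is a $*$-subalgebra of $L^2(K)$ (with convolution $(\varphi_1*\varphi_2)(k)=\sum_{k'\in K}\varphi_1(k')\varphi_2(k'^{-1}k)$ and involution $\varphi^*(k)=\overline{\varphi(k^{-1})}$), and the map $A\mapsto \tilde\varphi_A$, $\tilde\varphi_A(k)=A_{x_0,k\cdot x_0}$ ($k\in K$), is a $*$-algebra isomorphism from $\mathscr{A}$ onto $L^2(K)^H$.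
   Context: $\mathscr{A}$ denotes the $*$-algebra (under matrix multiplication and conjugate transpose) of complex $X\times X$ matrices $M$ with $M_{g\cdot x,g\cdot y}=M_{x,y}$ for all $g\in G$, $x,y\in X$. A subgroup $K\subset G$ is regular if it acts transitively on $X$ with trivial point stabilizers. *)

From HB Require Import structures.
From mathcomp Require Import all_boot all_order all_algebra all_fingroup all_field.
Set Implicit Arguments. Unset Strict Implicit. Unset Printing Implicit Defensive.
Import GRing.Theory Num.Theory.
Local Open Scope ring_scope.

Section Defs.
Variables (C : numClosedFieldType) (gT : finGroupType) (T : finType) (to : {action gT &-> T}).

(* MathComp actions are right actions (x ^ g); the paper's left action is
   g . x := to x g^-1. *)
Definition lact (g : gT) (x : T) : T := to x g^-1%g.

Definition mxX := T -> T -> C.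
Definition mxX_mul (A B : mxX) : mxX := fun x y => \sum_(z : T) A x z * B z y.
Definition mxX_add (A B : mxX) : mxX := fun x y => A x y + B x y.
Definition mxX_scale (c : C) (A : mxX) : mxX := fun x y => c * A x y.
Definition mxX_adj (A : mxX) : mxX := fun x y => (A y x)^*.
Definition mxX_one : mxX := fun x y => (x == y)%:R.

Definition in_scrA (G : {group gT}) (A : mxX) : Prop :=
  forall g x y, g \in G -> A (lact g x) (lact g y) = A x y.

Definition conv (K : {group gT}) (f1 f2 : subg_of K -> C) : subg_of K -> C :=
  fun k => \sum_(k' : subg_of K) f1 k' * f2 (k'^-1 * k)%g.
Definition fstar (K : {group gT}) (f : subg_of K -> C) : subg_of K -> C :=
  fun k => (f (k^-1)%g)^*.
Definition fdelta1 (K : {group gT}) : subg_of K -> C :=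
  fun k => (k == 1%g)%:R.

Definition in_L2KH (G K : {group gT}) (x0 : T) (f : subg_of K -> C) : Prop :=
  forall (h : gT) (k k' : subg_of K), (h \in 'C_G[x0 | to])%g ->
    lact (h * sgval k)%g x0 = lact (sgval k') x0 -> f k' = f k.

Definition phiA (K : {group gT}) (x0 : T) (A : mxX) : subg_of K -> C :=
  fun k => A x0 (lact (sgval k) x0).

End Defs.

Arguments in_L2KH {C gT T} to G K x0 f.
Arguments phiA {C gT T} to K x0 A k.
Arguments fdelta1 {C gT} K k.
Arguments in_scrA {C gT T} to G A.

(* Let K be regular, so that k |-> k.x0 is a bijection K -> X.  A G-invariant
   matrix A is determined by its row at x0, since A_{k.x0, y} = A_{x0, k^-1.y};
   transporting that row to K gives phi_A, and the substitution z = k'.x0 turns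
   matrix products into convolutions and adjoints into the involution.
   Invariance under the stabiliser H of x0 is exactly what is left of
   G-invariance after fixing the row, which identifies the image with
   L^2(K)^H.  Being the image of a *-algebra under a *-homomorphism,
   L^2(K)^H is then itself a *-subalgebra. *)

From HB Require Import structures.
From mathcomp Require Import all_boot all_order all_algebra all_fingroup all_field.
Set Implicit Arguments. Unset Strict Implicit. Unset Printing Implicit Defensive.
Import GRing.Theory Num.Theory.
Local Open Scope ring_scope.

Section LeftAction.
Variables (gT : finGroupType) (T : finType) (to : {action gT &-> T}).

Lemma lactM g h x : lact to (g * h)%g x = lact to g (lact to h x).
Proof. by rewrite /lact invMg actM. Qed.

Lemma lact1 x : lact to 1%g x = x.
Proof. by rewrite /lact invg1 act1. Qed.

Lemma lactK g : cancel (lact to g) (lact to g^-1%g).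
Proof. by move=> x; rewrite -lactM mulVg lact1. Qed.

Lemma lactKV g : cancel (lact to g^-1%g) (lact to g).
Proof. by move=> x; rewrite -lactM mulgV lact1. Qed.

Lemma lact_inj g : injective (lact to g).
Proof. exact: can_inj (lactK g). Qed.

Lemma lact_astab1 (G : {group gT}) x h :
  h \in ('C_G[x | to])%g -> lact to h x = x.
Proof. by rewrite inE => /andP[_ /astab1P hx]; rewrite /lact -{1}hx actK. Qed.

Lemma astab1_lact (G : {group gT}) x h :
  h \in G -> lact to h x = x -> h \in ('C_G[x | to])%g.
Proof. by move=> hG hx; rewrite inE hG; apply/astab1P; rewrite -{1}hx actKV. Qed.

End LeftAction.

Section InvariantMatrices.
Variables (C : numClosedFieldType) (gT : finGroupType) (T : finType).
Variables (to : {action gT &-> T}) (G : {group gT}).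

Lemma scrA_mul (A B : mxX C T) :
  in_scrA to G A -> in_scrA to G B -> in_scrA to G (mxX_mul A B).
Proof.
move=> HA HB g x y gG; rewrite /mxX_mul.
rewrite (reindex (lact to g)); last by exists (lact to g^-1%g) => z _; [exact: lactK | exact: lactKV].
by apply: eq_bigr => z _; rewrite HA // HB.
Qed.

Lemma scrA_adj (A : mxX C T) : in_scrA to G A -> in_scrA to G (mxX_adj A).
Proof. by move=> HA g x y gG; rewrite /mxX_adj HA. Qed.

Lemma scrA_one : in_scrA to G (@mxX_one C T).
Proof. by move=> g x y gG; rewrite /mxX_one (inj_eq (@lact_inj _ _ to g)). Qed.

Variables (K : {group gT}) (x0 : T).

Lemma eq_in_L2KH (f f' : subg_of K -> C) :
  f =1 f' -> in_L2KH to G K x0 f -> in_L2KH to G K x0 f'.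
Proof. by move=> E Hf h k k' hH hk; rewrite -!E; apply: Hf hk. Qed.

Lemma phiA_in_L2KH (A : mxX C T) :
  in_scrA to G A -> in_L2KH to G K x0 (phiA to K x0 A).
Proof.
move=> HA h k k' hH; rewrite /phiA lactM => <-.
by rewrite -{1}(lact_astab1 hH) HA //; case/setIP: hH.
Qed.

End InvariantMatrices.

Section RegularSubgroup.
Variables (C : numClosedFieldType) (gT : finGroupType) (T : finType).
Variables (to : {action gT &-> T}) (G K : {group gT}) (x0 : T).
Hypothesis sKG : K \subset G.
Hypothesis trK : [transitive K, on [set: T] | to].
Hypothesis regK : ('C_K[x0 | to] = 1)%g.

Definition regpt (k : subg_of K) : T := lact to (sgval k) x0.

Definition regelt (y : T) : subg_of K := odflt 1%g [pick k | regpt k == y].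

Lemma regpt_inj : injective regpt.
Proof.
move=> k1 k2; rewrite /regpt => Ek.
have : ((sgval k1)^-1 * sgval k2)%g \in ('C_K[x0 | to])%g.
  by rewrite astab1_lact ?groupM ?groupV ?subgP // lactM -Ek lactK.
rewrite regK inE => /eqP /eqP; rewrite -eq_mulVg1 => /eqP; exact: subg_inj.
Qed.

Lemma regpt_surj y : exists k, regpt k = y.
Proof.
have : y \in orbit to K x0 by rewrite (atransP trK) ?inE.
case/orbitP=> a aK <-; exists (subg K a^-1).
by rewrite /regpt subgK ?groupV // /lact invgK.
Qed.

Lemma regeltK : cancel regelt regpt.
Proof.
move=> y; rewrite /regelt; case: pickP => [k /eqP //|noK].
by case: (regpt_surj y) => k ky; move: (noK k); rewrite ky eqxx.
Qed.

Lemma regptK : cancel regpt regelt.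
Proof. by move=> k; apply: regpt_inj; rewrite regeltK. Qed.

Lemma regpt1 : regpt 1%g = x0.
Proof. exact: lact1. Qed.

Lemma regeltVK y : lact to (sgval (regelt y))^-1%g y = x0.
Proof. by rewrite -{2}(regeltK y) /regpt lactK. Qed.

Lemma subg_in (k : subg_of K) : sgval k \in G.
Proof. exact: subsetP sKG _ (subgP k). Qed.

Lemma subgV_in (k : subg_of K) : (sgval k)^-1%g \in G.
Proof. by rewrite groupV subg_in. Qed.

Lemma scrA_phiA (A : mxX C T) : in_scrA to G A -> forall x y,
  A x y = phiA to K x0 A (regelt (lact to (sgval (regelt x))^-1%g y)).
Proof.
move=> HA x y; rewrite /phiA -[lact _ _ x0]/(regpt _) regeltK.
by rewrite -(HA _ _ _ (subgV_in (regelt x))) regeltVK.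
Qed.

Lemma phiA_inj (A B : mxX C T) : in_scrA to G A -> in_scrA to G B ->
  phiA to K x0 A =1 phiA to K x0 B -> forall x y, A x y = B x y.
Proof. by move=> HA HB E x y; rewrite (scrA_phiA HA) (scrA_phiA HB) E. Qed.

Lemma phiA_mul (A B : mxX C T) : in_scrA to G B -> forall k,
  phiA to K x0 (mxX_mul A B) k = conv (phiA to K x0 A) (phiA to K x0 B) k.
Proof.
move=> HB k; rewrite /phiA /mxX_mul /conv.
rewrite (reindex regpt); last by exists regelt => y _; [exact: regptK | exact: regeltK].
apply: eq_bigr => k' _; congr (_ * _).
by rewrite -(HB _ _ _ (subgV_in k')) /regpt lactK -lactM.
Qed.

Lemma phiA_adj (A : mxX C T) : in_scrA to G A -> forall k,
  phiA to K x0 (mxX_adj A) k = fstar (phiA to K x0 A) k.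
Proof. by move=> HA k; rewrite /phiA /mxX_adj /fstar -(HA _ _ _ (subgV_in k)) lactK. Qed.

Lemma phiA_one k : phiA to K x0 (@mxX_one C T) k = @fdelta1 C gT K k.
Proof.
rewrite /phiA /mxX_one /fdelta1 -[lact _ _ x0]/(regpt k) -{1}regpt1.
by rewrite (inj_eq regpt_inj) eq_sym.
Qed.

(* For x = a.x0 and g.x = a'.x0, the element a'^-1 g a lies in H and moves
   a^-1 b to a'^-1 b', which is why the matrix below is G-invariant. *)
Lemma regelt_conj_astab1 g x : g \in G ->
  ((sgval (regelt (lact to g x)))^-1 * g * sgval (regelt x))%g
    \in ('C_G[x0 | to])%g.
Proof.
move=> gG; apply: astab1_lact; first by rewrite !groupM ?subgV_in ?subg_in.
by rewrite !lactM -[lact _ (sgval (regelt x)) x0]/(regpt _) regeltK regeltVK.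
Qed.

Lemma phiA_surj (f : subg_of K -> C) : in_L2KH to G K x0 f ->
  exists2 A, in_scrA to G A & phiA to K x0 A =1 f.
Proof.
move=> Hf; exists (fun x y => f ((regelt x)^-1 * regelt y)%g).
  move=> g x y gG; apply: Hf (regelt_conj_astab1 x gG) _.
  rewrite [sgval _]/= !mulgA mulgK !lactM.
  rewrite -[lact _ (sgval (regelt y)) x0]/(regpt _).
  by rewrite -[lact _ (sgval (regelt _)) x0]/(regpt _) !regeltK.
move=> k; rewrite /phiA -[lact _ _ x0]/(regpt k) regptK.
suff -> : regelt x0 = 1%g by rewrite invg1 mul1g.
by apply: regpt_inj; rewrite regeltK regpt1.
Qed.

Lemma conv_in_L2KH (f1 f2 : subg_of K -> C) :
  in_L2KH to G K x0 f1 -> in_L2KH to G K x0 f2 -> in_L2KH to G K x0 (conv f1 f2).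
Proof.
case/phiA_surj=> [A1 HA1 E1] /phiA_surj[A2 HA2 E2].
apply: (eq_in_L2KH (f := phiA to K x0 (mxX_mul A1 A2))).
  by move=> k; rewrite phiA_mul //; apply: eq_bigr => k' _; rewrite E1 E2.
exact/phiA_in_L2KH/scrA_mul.
Qed.

Lemma fstar_in_L2KH (f : subg_of K -> C) :
  in_L2KH to G K x0 f -> in_L2KH to G K x0 (fstar f).
Proof.
case/phiA_surj=> A HA E.
apply: (eq_in_L2KH (f := phiA to K x0 (mxX_adj A))).
  by move=> k; rewrite phiA_adj // /fstar E.
exact/phiA_in_L2KH/scrA_adj.
Qed.

Lemma fdelta1_in_L2KH : in_L2KH to G K x0 (@fdelta1 C gT K).
Proof.
apply: (eq_in_L2KH (f := phiA to K x0 (@mxX_one C T))); first exact: phiA_one.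
exact/phiA_in_L2KH/scrA_one.
Qed.

End RegularSubgroup.

Theorem theorem3p11 (C : numClosedFieldType) (gT : finGroupType) (T : finType) (to : {action gT &-> T})
    (G K : {group gT}) (x0 : T)
    (HGtr : [transitive G, on [set: T] | to])
    (HKG : K \subset G)
    (HKtr : [transitive K, on [set: T] | to])
    (HKfree : forall x : T, ('C_K[x | to] = 1)%g) :
  (in_L2KH to G K x0 (fun _ => 0 : C)
   /\ (forall f1 f2 : subg_of K -> C, in_L2KH to G K x0 f1 -> in_L2KH to G K x0 f2 ->
        in_L2KH to G K x0 (fun k => f1 k + f2 k))
   /\ (forall (c : C) (f : subg_of K -> C), in_L2KH to G K x0 f -> in_L2KH to G K x0 (fun k => c * f k))
   /\ (forall f1 f2 : subg_of K -> C, in_L2KH to G K x0 f1 -> in_L2KH to G K x0 f2 ->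
        in_L2KH to G K x0 (conv f1 f2))
   /\ (forall f : subg_of K -> C, in_L2KH to G K x0 f -> in_L2KH to G K x0 (fstar f))
   /\ in_L2KH to G K x0 (@fdelta1 C gT K)) /\
  ((forall A : mxX C T, in_scrA to G A -> in_L2KH to G K x0 (phiA to K x0 A))
   /\ (forall A B : mxX C T, in_scrA to G A -> in_scrA to G B -> forall k,
        phiA to K x0 (mxX_add A B) k = phiA to K x0 A k + phiA to K x0 B k)
   /\ (forall (c : C) (A : mxX C T), in_scrA to G A -> forall k,
        phiA to K x0 (mxX_scale c A) k = c * phiA to K x0 A k)
   /\ (forall A B : mxX C T, in_scrA to G A -> in_scrA to G B -> forall k,
        phiA to K x0 (mxX_mul A B) k = conv (phiA to K x0 A) (phiA to K x0 B) k)
   /\ (forall A : mxX C T, in_scrA to G A -> forall k,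
        phiA to K x0 (mxX_adj A) k = fstar (phiA to K x0 A) k)
   /\ (forall k, phiA to K x0 (@mxX_one C T) k = @fdelta1 C gT K k)
   /\ (forall A B : mxX C T, in_scrA to G A -> in_scrA to G B ->
        (forall k, phiA to K x0 A k = phiA to K x0 B k) -> forall x y, A x y = B x y)
   /\ (forall f : subg_of K -> C, in_L2KH to G K x0 f ->
        exists2 A, in_scrA to G A & forall k, phiA to K x0 A k = f k)).
Proof.
have regK := HKfree x0.
split.
- split; first by move=> h k k' _ _.
  split; first by move=> f1 f2 H1 H2 h k k' hH hk; rewrite (H1 h k k') // (H2 h k k').
  split; first by move=> c f Hf h k k' hH hk; rewrite (Hf h k k').
  split; first exact: (conv_in_L2KH HKG HKtr regK).
  split; first exact: (fstar_in_L2KH HKG HKtr regK).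
  exact: (fdelta1_in_L2KH C regK).
- split; first exact: phiA_in_L2KH.
  split; first by move=> A B _ _ k.
  split; first by move=> c A _ k.
  split; first by move=> A B _ HB; exact: (phiA_mul HKG HKtr regK A HB).
  split; first by move=> A HA; exact: (phiA_adj x0 HKG HA).
  split; first exact: (phiA_one C regK).
  split; first exact: (phiA_inj HKG HKtr).
  exact: (phiA_surj HKG HKtr regK).
Qed.
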